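(* For $n=0,1,2,\ldots$ let $R_n=\sum_{k=0}^n\binom{n}{k}\binom{n+k}{k}\frac{1}{2k-1}$. The sequence $\{R_n\}_{n=4}^\infty$ is strictly log-convex; equivalently, the sequence $\{R_{n+1}/R_n\}_{n=3}^\infty$ is strictly increasing.
   Context: A sequence $\{z_n\}$ of positive numbers is strictly log-convex if $z_{n-1}z_{n+1}>z_n^2$ for all indices $n$ for which $z_{n-1},z_n,z_{n+1}$ belong to the sequence. *)

From mathcomp Require Import all_boot all_order all_algebra.
Set Implicit Arguments. Unset Strict Implicit. Unset Printing Implicit Defensive.
Import Order.TTheory GRing.Theory Num.Theory.
Local Open Scope ring_scope.

Definition Rseq (n : nat) : rat :=
  \sum_(0 <= k < n.+1) ('C(n, k) * 'C(n + k, k))%:R / ((2 * k)%:R - 1).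

Definition strictly_log_convex_from (m : nat) (z : nat -> rat) : Prop :=
  (forall n, (m <= n)%N -> 0 < z n) /\
  (forall n, (m < n)%N -> z n ^+ 2 < z n.-1 * z n.+1).

From mathcomp Require Import all_boot all_order all_algebra.
From mathcomp Require Import ring lra zify.
Set Implicit Arguments.
Unset Strict Implicit.
Unset Printing Implicit Defensive.
Import Order.TTheory GRing.Theory Num.Theory.
Local Open Scope ring_scope.

(* Summing a binomial identity termwise gives
   (2n+1) R_(n+1) = (2n+3) R_n + D_n + D_(n+1), where D_n are the central
   Delannoy numbers.  Hence R_n = (2n+1) T_n with increments
   T_(n+1) - T_n = e_n = (D_n + D_(n+1)) / ((2n+1)(2n+3)).  The Delannoy numbers
   are log-convex (their ratio increases, by their three-term recurrence), so
   D_n + D_(n+1) is log-convex too, which forces the ratios e_(n+1)/e_n to exceed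
   2 and to grow fast enough.  By induction T_(n+1) then stays in the window
   [e_n e_(n+1) / (e_(n+1) - e_n), e_(n+1)], and on that window the inequality
   R_(n+2)^2 < R_(n+1) R_(n+3) is a concave quadratic inequality in T_(n+1),
   which holds because it holds at both ends. *)

Section RatioInequalities.
Context {R : realFieldType}.
Implicit Types a b c : R.

Lemma ler_ratio a b c : 0 < a -> 0 < b -> (b / a <= c / b) = (b * b <= a * c).
Proof. by move=> a_gt0 b_gt0; rewrite ler_pdivrMr // mulrAC ler_pdivlMr // [c * a]mulrC. Qed.

Lemma ltr_ratio a b c : 0 < a -> 0 < b -> (b / a < c / b) = (b * b < a * c).
Proof. by move=> a_gt0 b_gt0; rewrite ltr_pdivrMr // mulrAC ltr_pdivlMr // [c * a]mulrC. Qed.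

Lemma log_convexD a b c a' b' c' :
  0 <= a -> 0 <= c -> 0 <= a' -> 0 <= c' ->
  b * b <= a * c -> b' * b' <= a' * c' -> (b + b') * (b + b') <= (a + a') * (c + c').
Proof.
move=> a0 c0 a'0 c'0 hb hb'.
have prod_le : (b * b') ^+ 2 <= (a * c') * (a' * c).
  have -> : (a * c') * (a' * c) = (a * c) * (a' * c') by ring.
  by rewrite expr2 mulrACA; apply: ler_pM; rewrite // -expr2 sqr_ge0.
have amgm : 4 * ((a * c') * (a' * c)) <= (a * c' + a' * c) ^+ 2.
  have -> : (a * c' + a' * c) ^+ 2 = (a * c' - a' * c) ^+ 2 + 4 * ((a * c') * (a' * c)) by ring.
  by rewrite lerDr sqr_ge0.
have cross : 2 * (b * b') <= a * c' + a' * c.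
  have [bb'_le0|bb'_gt0] := lerP (b * b') 0.
    have : 0 <= a * c' + a' * c by apply: addr_ge0; apply: mulr_ge0.
    lra.
  rewrite -ler_sqr ?nnegrE; [| lra | by apply: addr_ge0; apply: mulr_ge0].
  have -> : (2 * (b * b')) ^+ 2 = 4 * (b * b') ^+ 2 by ring.
  lra.
clear prod_le amgm; nra.
Qed.

(* For [u < v], the condition says that [t] lies in [[u v / (v - u), v]]. *)
Definition ratio_window a b t : Prop := [/\ 0 < t, t <= b & a * b <= t * (b - a)].

Lemma ratio_window_shift a b c t :
  0 < a -> 2 * a < b -> 2 * b < c -> b * b <= a * c ->
  ratio_window a b t -> ratio_window b c (t + b).
Proof.
move=> a_gt0 lt_ab lt_bc hb [t_gt0 le_tb low_t].
split; [lra | lra |].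
have low_tb : b * b <= (t + b) * (b - a) by nra.
have : b * c * (b - a) <= (t + b) * (c - b) * (b - a).
  have : b * c * (b - a) <= b * b * (c - b) by nra.
  have : b * b * (c - b) <= (t + b) * (b - a) * (c - b) by apply: ler_wpM2r; lra.
  lra.
by rewrite ler_pM2r; lra.
Qed.

(* [f] below is a concave quadratic in [t], positive at both ends of the window
   [[E u / (E - 1), E u]], hence positive on it. *)
Lemma ratio_window_sqr_lt a u E e t : 0 < a -> 0 < u -> 2 < E ->
  4 * E ^+ 2 < a * (E - 1) * (e - E) -> 2 * a + 16 < a * e ->
  ratio_window u (E * u) t ->
  (a + 4) * (t + E * u) ^+ 2 < a * (t * (t + E * u + e * (E * u))).
Proof.
move=> a_gt0 u_gt0 E_gt2 lo_cond hi_cond [_ t_le_hi t_ge_lo].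
pose f x := a * (x * (x + E * u + e * (E * u))) - (a + 4) * (x + E * u) ^+ 2.
suff : 0 < f t by rewrite /f subr_gt0.
pose lo := E * u / (E - 1).
have Eu_gt0 : 0 < E * u by apply: mulr_gt0 => //; lra.
have E1_neq0 : E - 1 != 0 by rewrite gt_eqF //; lra.
have le_lo_t : lo <= t by rewrite /lo ler_pdivrMr; [nra | lra].
have lt_lo_hi : lo < E * u by rewrite /lo ltr_pdivrMr; [nra | lra].
have f_lo : 0 < f lo.
  have -> : f lo = (E * u) ^+ 2 * (a * (E - 1) * (e - E) - 4 * E ^+ 2) / (E - 1) ^+ 2.
    by rewrite /f /lo; field.
  by rewrite divr_gt0 ?mulr_gt0 ?exprn_gt0 ?subr_gt0 //; lra.
have f_hi : 0 < f (E * u).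
  have -> : f (E * u) = (E * u) ^+ 2 * (a * e - 2 * a - 16) by rewrite /f; ring.
  by rewrite mulr_gt0 ?exprn_gt0 //; lra.
have interp : f t * (E * u - lo) = (E * u - t) * f lo + (t - lo) * f (E * u) +
    4 * (t - lo) * (E * u - t) * (E * u - lo).
  by rewrite /f; ring.
rewrite -(pmulr_lgt0 _ (_ : 0 < E * u - lo)) ?subr_gt0 // interp.
have : 0 <= 4 * (t - lo) * (E * u - t) * (E * u - lo).
  by apply: mulr_ge0; [apply: mulr_ge0; [apply: mulr_ge0|]|]; lra.
have [lt_t_hi|ge_t_hi] := ltrP t (E * u).
  have : 0 < (E * u - t) * f lo by apply: mulr_gt0; lra.
  have : 0 <= (t - lo) * f (E * u) by apply: mulr_ge0; lra.
  lra.
have : 0 <= (E * u - t) * f lo by apply: mulr_ge0; lra.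
have : 0 < (t - lo) * f (E * u) by apply: mulr_gt0; lra.
lra.
Qed.

Lemma ratio_gap_bounds (x t t' : R) : 2 <= x -> 4 <= t -> t <= t' ->
  let E := (2 * x + 1) * t / (2 * x + 5) in
  let E' := (2 * x + 3) * t' / (2 * x + 7) in
  let a := (2 * x + 3) * (2 * x + 7) in
  [/\ 2 < E, 4 * E ^+ 2 < a * (E - 1) * (E' - E) & 2 * a + 16 < a * E'].
Proof.
move=> x_ge2 t_ge4 le_tt' E E' a.
have x5_gt0 : 0 < 2 * x + 5 by lra.
have x7_gt0 : 0 < 2 * x + 7 by lra.
have E_def : E * (2 * x + 5) = (2 * x + 1) * t by rewrite divfK ?gt_eqF.
have E'_def : E' * (2 * x + 7) = (2 * x + 3) * t' by rewrite divfK ?gt_eqF.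
have E_gt2 : 2 < E by rewrite ltr_pdivlMr //; nra.
have gap : 8 * t <= (2 * x + 5) * (2 * x + 7) * (E' - E).
  have -> : (2 * x + 5) * (2 * x + 7) * (E' - E) =
      (2 * x + 5) * (E' * (2 * x + 7)) - (2 * x + 7) * (E * (2 * x + 5)) by ring.
  rewrite E_def E'_def; nra.
split => //.
- rewrite -(ltr_pM2r x5_gt0).
  have -> : 4 * E ^+ 2 * (2 * x + 5) = 4 * E * ((2 * x + 1) * t) by rewrite -E_def; ring.
  have -> : a * (E - 1) * (E' - E) * (2 * x + 5) =
      (2 * x + 3) * (E - 1) * ((2 * x + 5) * (2 * x + 7) * (E' - E)) by rewrite /a; ring.
  have : 2 * (2 * x + 3) < E * (2 * x + 5) by rewrite E_def; nra.
  have : 0 <= (2 * x + 3) * (E - 1) by apply: mulr_ge0; lra.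
  nra.
- have -> : a * E' = (2 * x + 3) * (E' * (2 * x + 7)) by rewrite /a; ring.
  rewrite E'_def /a; nra.
Qed.
End RatioInequalities.

Definition delannoy_summand (n k : nat) : rat := ('C(n, k) * 'C(n + k, k))%:R.

Definition delannoy (n : nat) : rat := \sum_(0 <= k < n.+1) delannoy_summand n k.

Lemma delannoy_summand_small n k : (n < k)%N -> delannoy_summand n k = 0.
Proof. by move=> lt_nk; rewrite /delannoy_summand bin_small. Qed.

Lemma delannoy_summand0 n : delannoy_summand n 0 = 1.
Proof. by rewrite /delannoy_summand !bin0. Qed.

Lemma delannoy_summand_ge0 n k : 0 <= delannoy_summand n k.
Proof. exact: ler0n. Qed.

Lemma delannoy_summandSn n k :
  (n.+1 - k)%:R * delannoy_summand n.+1 k = (n.+1 + k)%:R * delannoy_summand n k.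
Proof.
rewrite /delannoy_summand -!natrM; congr _%:R.
have bin_n : (n.+1 * 'C(n, k) = (n.+1 - k) * 'C(n.+1, k))%N by rewrite -mul_bin_down.
have bin_nk : ((n + k).+1 * 'C(n + k, k) = n.+1 * 'C((n + k).+1, k))%N.
  by rewrite mul_bin_down; congr (_ * _)%N; lia.
rewrite mulnA -bin_n addSn -mulnA [RHS]mulnCA (mulnA _ _ 'C(_, _)) bin_nk !mulnA.
congr (_ * _)%N; lia.
Qed.

Lemma delannoy_summandnS n k :
  (k.+1 * k.+1)%:R * delannoy_summand n k.+1 =
  ((n - k) * (n + k).+1)%:R * delannoy_summand n k.
Proof.
rewrite /delannoy_summand -!natrM; congr _%:R.
have bin_nk : ((n + k).+1 * 'C(n + k, k) = k.+1 * 'C((n + k).+1, k.+1))%N.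
  by rewrite -mul_bin_diag.
by rewrite mulnACA [RHS]mulnACA mul_bin_left bin_nk addnS.
Qed.

Lemma delannoy_summand_rec n j : (j <= n.+1)%N ->
  n.+2%:R * delannoy_summand n.+2 j.+1 + n.+1%:R * delannoy_summand n j.+1 =
  (2 * n + 3)%:R * delannoy_summand n.+1 j.+1 + (4 * n + 6)%:R * delannoy_summand n.+1 j.
Proof.
rewrite leq_eqVlt => /orP[/eqP ->|].
  rewrite (@delannoy_summand_small n) // (@delannoy_summand_small n.+1) //.
  have top := delannoy_summandnS n.+2 n.+1.
  have diag := delannoy_summandSn n.+1 n.+1.
  rewrite subSnn mul1r in diag; rewrite diag subSnn mul1n in top.
  have nz : (n.+2 * n.+2)%:R != 0 :> rat by rewrite pnatr_eq0.
  apply: (mulfI nz); rewrite !mulr0 !addr0 mulrCA top; ring.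
rewrite ltnS => /subnK <-; move: (n - j)%N => d.
(* With n = d + j all four summands are rational multiples of [c]. *)
have e1 := delannoy_summandSn (d + j).+1 j.+1.
have e2 := delannoy_summandSn (d + j) j.+1.
have e3 := delannoy_summandnS (d + j).+1 j.
rewrite subSS subSn ?leq_addl // addnK in e1.
rewrite subSS addnK in e2.
rewrite subSn ?leq_addl // addnK in e3.
set c := delannoy_summand (d + j).+1 j.+1 in e1 e2 e3 *.
have p1 : d.+1%:R != 0 :> rat by rewrite pnatr_eq0.
have p2 : ((d + j).+1 + j.+1)%:R != 0 :> rat by rewrite pnatr_eq0 addnS.
have p3 : (d.+1 * ((d + j).+1 + j).+1)%:R != 0 :> rat by rewrite pnatr_eq0 muln_eq0.
have -> : delannoy_summand (d + j).+2 j.+1 = ((d + j).+2 + j.+1)%:R * c / d.+1%:R.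
  by apply: (mulfI p1); rewrite e1 [RHS]mulrC divfK.
have -> : delannoy_summand (d + j) j.+1 = d%:R * c / ((d + j).+1 + j.+1)%:R.
  by apply: (mulfI p2); rewrite -e2 [RHS]mulrC divfK.
have -> : delannoy_summand (d + j).+1 j =
    (j.+1 * j.+1)%:R * c / (d.+1 * ((d + j).+1 + j).+1)%:R.
  by apply: (mulfI p3); rewrite -e3 [RHS]mulrC divfK.
have d_ge0 : 0 <= d%:R :> rat by rewrite ler0n.
have j_ge0 : 0 <= j%:R :> rat by rewrite ler0n.
field; apply/andP; split; rewrite gt_eqF //; lra.
Qed.

Lemma delannoy_widen n N : (n < N)%N ->
  delannoy n = \sum_(0 <= k < N) delannoy_summand n k.
Proof.
move=> lt_nN; rewrite /delannoy [RHS](big_cat_nat _ (n := n.+1)) //=.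
rewrite [X in _ + X]big_nat_cond [X in _ + X]big1 ?addr0 // => k /andP[/andP[le_nk _] _].
exact: delannoy_summand_small.
Qed.

Lemma delannoy_rec n :
  n.+2%:R * delannoy n.+2 + n.+1%:R * delannoy n = (6 * n + 9)%:R * delannoy n.+1.
Proof.
transitivity ((2 * n + 3)%:R * \sum_(0 <= k < n.+3) delannoy_summand n.+1 k +
              (4 * n + 6)%:R * delannoy n.+1).
  rewrite (@delannoy_widen n n.+3); last lia.
  rewrite /delannoy !mulr_sumr -!big_split /=.
  rewrite [LHS]big_nat_recl // [X in _ = X + _]big_nat_recl //.
  under eq_big_nat => j /andP[_ le_jn] do rewrite delannoy_summand_rec //.
  by rewrite big_split /= !delannoy_summand0 -!mulr_sumr; ring.
rewrite -(@delannoy_widen n.+1 n.+3); last lia.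
rewrite -mulrDl -natrD; congr (_%:R * _); lia.
Qed.

Lemma delannoy_gt0 n : 0 < delannoy n.
Proof.
rewrite /delannoy big_nat_recl // delannoy_summand0.
by rewrite ltr_pwDl // sumr_ge0 // => k _; apply: delannoy_summand_ge0.
Qed.

Lemma delannoyE n :
  delannoy n.+2 = ((6 * n + 9)%:R * delannoy n.+1 - n.+1%:R * delannoy n) / n.+2%:R.
Proof.
have nz : n.+2%:R != 0 :> rat by rewrite pnatr_eq0.
by apply: (mulIf nz); rewrite divfK // -delannoy_rec; ring.
Qed.

Lemma delannoy0 : delannoy 0 = 1.
Proof. by rewrite /delannoy big_nat1 delannoy_summand0. Qed.

Lemma delannoy1 : delannoy 1 = 3.
Proof. by rewrite /delannoy big_nat_recr //= big_nat1 /delannoy_summand -natrD. Qed.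

Lemma delannoy2 : delannoy 2 = 13.
Proof. by rewrite delannoyE delannoy1 delannoy0; field. Qed.

Lemma delannoy3 : delannoy 3 = 63.
Proof. by rewrite delannoyE delannoy2 delannoy1; field. Qed.

Lemma delannoy4 : delannoy 4 = 321.
Proof. by rewrite delannoyE delannoy3 delannoy2; field. Qed.

Definition delannoy_ratio n := delannoy n.+1 / delannoy n.

Lemma delannoy_ratioS n :
  delannoy_ratio n.+1 = ((6 * n + 9)%:R - n.+1%:R / delannoy_ratio n) / n.+2%:R.
Proof.
rewrite /delannoy_ratio delannoyE.
have D0 := delannoy_gt0 n; have D1 := delannoy_gt0 n.+1.
have n_ge0 : 0 <= n%:R :> rat by rewrite ler0n.
by field; rewrite !gt_eqF //; lra.
Qed.

Lemma delannoy_ratio_step n (t t' : rat) : 3 <= t -> t <= t' ->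
  ((6 * n + 9)%:R - n.+1%:R / t) / n.+2%:R <= ((6 * n.+1 + 9)%:R - n.+2%:R / t') / n.+3%:R.
Proof.
move=> t_ge3 le_tt'.
have n_ge0 : 0 <= n%:R :> rat by rewrite ler0n.
have inv_t : t^-1 <= 3^-1 by rewrite lef_pV2 ?posrE //; lra.
have inv_t' : t'^-1 <= t^-1 by rewrite lef_pV2 ?posrE //; lra.
have inv_t'_gt0 : 0 < t'^-1 by rewrite invr_gt0; lra.
have inv3 : 3^-1 * 3 = 1 :> rat by rewrite mulVf.
rewrite ler_pdivrMr ?ltr0n // mulrAC ler_pdivlMr ?ltr0n //.
nra.
Qed.

Lemma delannoy_ratio_ge3_nondecr n : 3 <= delannoy_ratio n <= delannoy_ratio n.+1.
Proof.
elim: n => [|n /andP[ge3 le_n]].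
  have r0 : delannoy_ratio 0 = 3 by rewrite /delannoy_ratio delannoy1 delannoy0 divr1.
  have r1 : delannoy_ratio 1 = 13 / 3 by rewrite delannoy_ratioS r0; field.
  by rewrite r1 r0 lexx ler_pdivlMr.
rewrite (le_trans ge3 le_n) (delannoy_ratioS n.+1) [X in X <= _]delannoy_ratioS /=.
exact: delannoy_ratio_step.
Qed.

Lemma delannoy_log_convex n : delannoy n.+1 * delannoy n.+1 <= delannoy n * delannoy n.+2.
Proof.
rewrite -ler_ratio ?delannoy_gt0 //.
by have /andP[_] := delannoy_ratio_ge3_nondecr n.
Qed.

Definition delannoy_pair_sum n := delannoy n + delannoy n.+1.

Definition pair_sum_ratio n := delannoy_pair_sum n.+1 / delannoy_pair_sum n.

Lemma delannoy_pair_sum_gt0 n : 0 < delannoy_pair_sum n.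
Proof. by rewrite addr_gt0 ?delannoy_gt0. Qed.

Lemma delannoy_log_convex2 n :
  delannoy n.+1 * delannoy n.+2 <= delannoy n * delannoy n.+3.
Proof.
have D1 := delannoy_gt0 n.+1; have D2 := delannoy_gt0 n.+2.
rewrite -(@ler_pM2r _ (delannoy n.+1 * delannoy n.+2)) ?mulr_gt0 //.
have -> : delannoy n * delannoy n.+3 * (delannoy n.+1 * delannoy n.+2) =
          (delannoy n * delannoy n.+2) * (delannoy n.+1 * delannoy n.+3) by ring.
rewrite mulrACA; apply: ler_pM; try exact: delannoy_log_convex.
  - exact: mulr_ge0 (ltW D1) (ltW D1).
  - exact: mulr_ge0 (ltW D2) (ltW D2).
Qed.

Lemma pair_sum_ratio_nondecr n : pair_sum_ratio n <= pair_sum_ratio n.+1.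
Proof.
rewrite ler_ratio ?delannoy_pair_sum_gt0 //.
rewrite /delannoy_pair_sum; apply: log_convexD;
  try exact: delannoy_log_convex; try exact: delannoy_log_convex2.
all: exact/ltW/delannoy_gt0.
Qed.

Lemma pair_sum_ratio_ge4 n : 4 <= pair_sum_ratio n.
Proof.
elim: n => [|n IH]; last exact: le_trans IH (pair_sum_ratio_nondecr n).
rewrite /pair_sum_ratio /delannoy_pair_sum delannoy2 delannoy1 delannoy0.
by rewrite ler_pdivlMr //; lra.
Qed.

Lemma Rseq_widen n N : (n < N)%N ->
  Rseq n = \sum_(0 <= k < N) delannoy_summand n k / ((2 * k)%:R - 1).
Proof.
move=> lt_nN; rewrite /Rseq [RHS](big_cat_nat _ (n := n.+1)) //=.
rewrite [X in _ + X]big_nat_cond [X in _ + X]big1 ?addr0 // => k /andP[/andP[le_nk _] _].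
by rewrite delannoy_summand_small // mul0r.
Qed.

Lemma Rseq_summandS n k : (k <= n.+1)%N ->
  (2 * n + 1)%:R * (delannoy_summand n.+1 k / ((2 * k)%:R - 1)) =
  (2 * n + 3)%:R * (delannoy_summand n k / ((2 * k)%:R - 1)) +
  delannoy_summand n k + delannoy_summand n.+1 k.
Proof.
move=> le_kn.
have rec := delannoy_summandSn n k; rewrite natrB // in rec.
have den_neq0 : (2 * k)%:R - 1 != 0 :> rat.
  by rewrite subr_eq0 -[1]/(1%:R) eqr_nat; apply/eqP; lia.
apply/eqP; rewrite -subr_eq0.
have -> : (2 * n + 1)%:R * (delannoy_summand n.+1 k / ((2 * k)%:R - 1)) -
    ((2 * n + 3)%:R * (delannoy_summand n k / ((2 * k)%:R - 1)) +
     delannoy_summand n k + delannoy_summand n.+1 k) =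
    2 * ((n.+1%:R - k%:R) * delannoy_summand n.+1 k -
         (n.+1 + k)%:R * delannoy_summand n k) / ((2 * k)%:R - 1) :> rat.
  by rewrite ?natrD ?natrM; field; move: den_neq0; rewrite mul2n -addnn natrD.
by rewrite rec subrr mulr0 mul0r.
Qed.

Lemma Rseq_rec n :
  (2 * n + 1)%:R * Rseq n.+1 = (2 * n + 3)%:R * Rseq n + delannoy_pair_sum n.
Proof.
rewrite (@Rseq_widen n n.+2) // /delannoy_pair_sum (@delannoy_widen n n.+2) //.
rewrite /Rseq /delannoy !mulr_sumr -!big_split /=.
by apply: eq_big_nat => k /andP[_ le_kn]; rewrite addrA Rseq_summandS.
Qed.

Definition Rquot n := Rseq n / (2 * n + 1)%:R.

Definition Rquot_inc n := delannoy_pair_sum n / ((2 * n + 1) * (2 * n + 3))%:R.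

Definition inc_ratio n := (2 * n + 1)%:R * pair_sum_ratio n / (2 * n + 5)%:R.

Lemma RseqE n : Rseq n = (2 * n + 1)%:R * Rquot n.
Proof. by rewrite /Rquot mulrC divfK // pnatr_eq0 addn1. Qed.

Lemma Rquot_inc_gt0 n : 0 < Rquot_inc n.
Proof. by rewrite divr_gt0 ?delannoy_pair_sum_gt0 // ltr0n muln_gt0 !addn_gt0 !orbT. Qed.

Lemma RquotS n : Rquot n.+1 = Rquot n + Rquot_inc n.
Proof.
rewrite /Rquot /Rquot_inc natrM.
have -> : (2 * n.+1 + 1)%:R = (2 * n + 3)%:R :> rat by congr _%:R; lia.
have -> : Rseq n.+1 = ((2 * n + 3)%:R * Rseq n + delannoy_pair_sum n) / (2 * n + 1)%:R.
  by rewrite -Rseq_rec mulrC mulKf // pnatr_eq0 addn1.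
have n_ge0 : 0 <= n%:R :> rat by rewrite ler0n.
by rewrite !natrD ?natrM; field; rewrite !gt_eqF //; lra.
Qed.

Lemma Rquot_incS n : Rquot_inc n.+1 = inc_ratio n * Rquot_inc n.
Proof.
rewrite /Rquot_inc /inc_ratio /pair_sum_ratio !natrM.
have -> : (2 * n.+1 + 1)%:R = (2 * n + 3)%:R :> rat by congr _%:R; lia.
have -> : (2 * n.+1 + 3)%:R = (2 * n + 5)%:R :> rat by congr _%:R; lia.
have P_gt0 := delannoy_pair_sum_gt0 n.
have n_ge0 : 0 <= n%:R :> rat by rewrite ler0n.
by rewrite !natrD ?natrM; field; rewrite !gt_eqF //; lra.
Qed.

Lemma inc_ratio_bounds m : (2 <= m)%N ->
  let a := (2 * m + 3)%:R * (2 * m + 7)%:R in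
  [/\ 2 < inc_ratio m,
      4 * inc_ratio m ^+ 2 < a * (inc_ratio m - 1) * (inc_ratio m.+1 - inc_ratio m) &
      2 * a + 16 < a * inc_ratio m.+1].
Proof.
move=> m_ge2 a.
have x_ge2 : 2 <= m%:R :> rat by rewrite (ler_nat _ 2 m).
rewrite /a /inc_ratio.
have -> : (2 * m.+1 + 1 = 2 * m + 3)%N by lia.
have -> : (2 * m.+1 + 5 = 2 * m + 7)%N by lia.
rewrite !(natrD _ _ 3) !(natrD _ _ 1) !(natrD _ _ 5) !(natrD _ _ 7) !natrM.
exact: ratio_gap_bounds x_ge2 (pair_sum_ratio_ge4 m) (pair_sum_ratio_nondecr m).
Qed.

Lemma Rquot0 : Rquot 0 = -1.
Proof. by rewrite /Rquot /Rseq big_nat1 /= sub0r invrN invr1 mulrN1 divr1. Qed.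

Lemma Rquot3 : Rquot 3 = 25 / 7.
Proof.
rewrite !RquotS Rquot0 /Rquot_inc /delannoy_pair_sum delannoy0 delannoy1 delannoy2 delannoy3 -!natrD /=.
by field.
Qed.

Lemma Rquot_inc2 : Rquot_inc 2 = 76 / 35.
Proof. by rewrite /Rquot_inc /delannoy_pair_sum delannoy2 delannoy3 -natrD. Qed.

Lemma Rquot_inc3 : Rquot_inc 3 = 384 / 63.
Proof. by rewrite /Rquot_inc /delannoy_pair_sum delannoy3 delannoy4 -natrD. Qed.

Lemma Rquot_window m : (2 <= m)%N ->
  ratio_window (Rquot_inc m) (Rquot_inc m.+1) (Rquot m.+1).
Proof.
move=> /subnK <-; elim: (m - 2)%N => [|k IH].
  by rewrite /= Rquot3 Rquot_inc2 Rquot_inc3; split; lra.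
rewrite addSn RquotS (Rquot_incS (k + 2).+1).
have k_ge2 : (2 <= k + 2)%N by lia.
have [E_gt2 E_gap _] := inc_ratio_bounds k_ge2.
have [E'_gt2 _ _] := inc_ratio_bounds (leqW k_ge2).
have a_gt0 : 0 < (2 * (k + 2) + 3)%:R * (2 * (k + 2) + 7)%:R :> rat.
  by rewrite -natrM ltr0n muln_gt0 !addn_gt0 !orbT.
have v_def := Rquot_incS (k + 2).
have u_gt0 := Rquot_inc_gt0 (k + 2).
set u := Rquot_inc (k + 2) in IH v_def u_gt0.
set E := inc_ratio (k + 2) in E_gt2 E_gap v_def.
set E' := inc_ratio (k + 2).+1 in E'_gt2 E_gap *.
have le_EE' : E <= E'.
  have : 0 < (2 * (k + 2) + 3)%:R * (2 * (k + 2) + 7)%:R * (E - 1) :> rat.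
    by rewrite mulr_gt0 // subr_gt0 (lt_trans _ E_gt2).
  have : 0 <= 4 * E ^+ 2 by rewrite mulr_ge0 ?sqr_ge0.
  nra.
have Eu_gt0 : 0 < E * u by rewrite mulr_gt0 // (lt_trans _ E_gt2).
apply: ratio_window_shift IH => //; rewrite v_def; clear E_gap.
- nra.
- nra.
- rewrite (mulrA u) [u * E']mulrC.
  by apply: ler_wpM2r; [exact: ltW | apply: ler_wpM2r; [exact: ltW |]].
Qed.

Lemma Rseq_log_convex m : (2 <= m)%N -> Rseq m.+2 ^+ 2 < Rseq m.+1 * Rseq m.+3.
Proof.
move=> m_ge2.
have [E_gt2 E_gap E'_gap] := inc_ratio_bounds m_ge2.
have a_gt0 : 0 < (2 * m + 3)%:R * (2 * m + 7)%:R :> rat.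
  by rewrite -natrM ltr0n muln_gt0 !addn_gt0 !orbT.
have window := Rquot_window m_ge2.
rewrite Rquot_incS in window.
have := ratio_window_sqr_lt a_gt0 (Rquot_inc_gt0 m) E_gt2 E_gap E'_gap window.
rewrite -Rquot_incS -Rquot_incS.
rewrite !RseqE (RquotS m.+2) (RquotS m.+1).
lra.
Qed.

Lemma Rseq_gt0 n : (3 <= n)%N -> 0 < Rseq n.
Proof.
case: n => [|m] // /ltnSE m_ge2.
have [Rquot_gt0 _ _] := Rquot_window m_ge2.
by rewrite RseqE mulr_gt0 // ltr0n addn1.
Qed.

Theorem theorem4p1 :
  strictly_log_convex_from 4 Rseq /\
  (forall n, (3 <= n)%N -> Rseq n.+1 / Rseq n < Rseq n.+2 / Rseq n.+1).
Proof.
split; [split|].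
- by move=> n n_ge4; apply: Rseq_gt0; lia.
- by case=> [|[|m]] // m_gt2; apply: Rseq_log_convex; lia.
- case=> [|m] // /ltnSE m_ge2.
  by rewrite ltr_ratio ?Rseq_gt0 -?expr2 ?Rseq_log_convex //; lia.
Qed.
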